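(* Let $\mu=(p,q,r,s)\in\mathbb{C}^4$ and $\phi\in\Phi_\mu$. Then $\log^+|\phi|=\max\{\log|\phi|,0\}$ has an upper Fibonacci bound on $\Omega$: for a fixed edge $e$ there is $\kappa>0$ with $\log^+|\phi(X)|\le \kappa F_e(X)$ for all $X\in\Omega$.
   Context: Let $\Sigma$ be a countably infinite simplicial tree, properly embedded in the plane, all of whose vertices have degree $3$. A complementary region is the closure of a connected component of the complement of $\Sigma$; $\Omega$ is the set of complementary regions, $E(\Sigma)$ the set of edges. Every edge $e$ is the intersection of exactly two regions $X,Y$, and its two endpoints lie on two further regions $Z,W$ respectively; write $e\leftrightarrow(X,Y;Z,W)$. Three regions meet at each vertex. Fix a coloring $\mathcal C:\Omega\cup E(\Sigma)\to\{1,2,3\}$ such that for every $e\leftrightarrow(X,Y;Z,W)$, $\mathcal C(e)=\mathcal C(Z)=\mathcal C(W)$ and $\mathcal C(e),\mathcal C(X),\mathcal C(Y)$ are pairwise distinct; $\Omega_i$, $E_i$ denote regions/edges of color $i$. For $\mu=(p,q,r,s)\in\mathbb{C}^4$, a $\mu$-Markoff map is $\phi:\Omega\to\mathbb{C}$ such that (i) at every vertex with regions $X\in\Omega_1,Y\in\Omega_2,Z\in\Omega_3$, $x^2+y^2+z^2+xyz=px+qy+rz+s$ where $x=\phi(X)$, etc.; (ii) for $e\in E_1$, $e\leftrightarrow(Y,Z;X,X')$: $\phi(X)+\phi(X')=p-\phi(Y)\phi(Z)$; for $e\in E_2$, $e\leftrightarrow(X,Z;Y,Y')$: $\phi(Y)+\phi(Y')=q-\phi(X)\phi(Z)$;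 for $e\in E_3$, $e\leftrightarrow(X,Y;Z,Z')$: $\phi(Z)+\phi(Z')=r-\phi(X)\phi(Y)$. $\Phi_\mu$ is the set of such maps. Fibonacci function: for a directed edge $\vec e$ with underlying edge $e=X_1\cap X_2$, let $\Omega^0(e)=\{X_1,X_2\}$; removing the interior of $e$ leaves two subtrees $\Sigma^+$ (containing the head of $\vec e$) and $\Sigma^-$; $\Omega^\pm(\vec e)$ is the set of regions whose boundary lies in $\Sigma^\pm$, and $\Omega^{0-}(\vec e)=\Omega^0(e)\cup\Omega^-(\vec e)$. For $Z\in\Omega^{0-}(\vec e)$ let $d(Z)$ be the number of edges in a shortest path from the head of $\vec e$ to $Z$. For $Z\in\Omega^-(\vec e)$ there are exactly two regions $X,Y\in\Omega^{0-}(\vec e)$ with $d(X),d(Y)<d(Z)$ meeting $Z$ (and $X,Y,Z$ meet at a vertex). Define $F_{\vec e}=1$ on $\Omega^0(e)$ and recursively $F_{\vec e}(Z)=F_{\vec e}(X)+F_{\vec e}(Y)$ for such $Z$. Define $F_e(X)=F_{\vec e}(X)$ for $X\in\Omega^{0-}(\vec e)$ and $F_e(X)=F_{-\vec e}(X)$ for $X\in\Omega^+(\vec e)$. *)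

From Stdlib Require Import Reals ZArith ClassicalEpsilon.
From Coquelicot Require Import Coquelicot.

(* Sigma is the (unique up to homeomorphism of the plane) countably   *)
(* infinite trivalent tree properly embedded in the plane; we use the  *)
(* standard model: Sigma is the tree dual to the Farey tessellation.   *)
(* Complementary regions <-> Q u {oo}, encoded as primitive integer    *)
(* vectors (a,b) up to sign, normalized by b > 0 or (a,b) = (1,0).     *)
(* Two regions meet in an edge of Sigma iff |ad - bc| = 1; the edges   *)
(* of Sigma are exactly the (unordered) pairs of such regions, and the *)
(* vertices of Sigma are the triples of pairwise adjacent regions.     *)

Definition is_region (v : Z * Z) : Prop :=
  Z.gcd (fst v) (snd v) = 1%Z /\
  ((0 < snd v)%Z \/ (snd v = 0%Z /\ fst v = 1%Z)).

Definition region : Type := { v : Z * Z | is_region v }.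

Definition rnum (X : region) : Z := fst (proj1_sig X).
Definition rden (X : region) : Z := snd (proj1_sig X).

Definition adj (X Y : region) : Prop :=
  Z.abs (rnum X * rden Y - rden X * rnum Y) = 1%Z.

(* Z meets both X and Y; for adjacent X, Y these are exactly the two   *)
(* regions Z, W containing the two endpoints of the edge X cap Y, i.e. *)
(* e <-> (X, Y; Z, W).                                                 *)
Definition common_nb (X Y Z : region) : Prop := adj X Z /\ adj Y Z.

Definition at_vertex (X Y Z : region) : Prop :=
  adj X Y /\ adj Y Z /\ adj X Z.

Inductive color : Type := c1 | c2 | c3.

(* Cr colors regions, Ce colors edges; the edge X cap Y has color      *)
(* Ce X Y (the constraints below force Ce X Y = Ce Y X).               *)
Definition is_coloring (Cr : region -> color)
    (Ce : region -> region -> color) : Prop :=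
  forall X Y Z W : region,
    adj X Y -> common_nb X Y Z -> common_nb X Y W -> Z <> W ->
    Ce X Y = Cr Z /\ Ce X Y = Cr W /\
    Ce X Y <> Cr X /\ Ce X Y <> Cr Y /\ Cr X <> Cr Y.

Local Open Scope C_scope.

Definition is_markoff_map (Cr : region -> color)
    (Ce : region -> region -> color) (p q r s : C)
    (phi : region -> C) : Prop :=
  (forall X Y Z : region, at_vertex X Y Z ->
     Cr X = c1 -> Cr Y = c2 -> Cr Z = c3 ->
     let x := phi X in let y := phi Y in let z := phi Z in
     x * x + y * y + z * z + x * y * z = p * x + q * y + r * z + s) /\
  (forall Y Z X X' : region, adj Y Z ->
     common_nb Y Z X -> common_nb Y Z X' -> X <> X' ->
     Ce Y Z = c1 -> phi X + phi X' = p - phi Y * phi Z) /\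
  (forall X Z Y Y' : region, adj X Z ->
     common_nb X Z Y -> common_nb X Z Y' -> Y <> Y' ->
     Ce X Z = c2 -> phi Y + phi Y' = q - phi X * phi Z) /\
  (forall X Y Z Z' : region, adj X Y ->
     common_nb X Y Z -> common_nb X Y Z' -> Z <> Z' ->
     Ce X Y = c3 -> phi Z + phi Z' = r - phi X * phi Y).

Local Close Scope C_scope.

(* fib_edge X1 X2 X Y W a b : the edge X cap Y of Sigma, traversed      *)
(* away from e, where W is the region at the endpoint of X cap Y       *)
(* closer to e, F_e(X) = a and F_e(Y) = b.  The region Z at the far    *)
(* endpoint of X cap Y is the new region with d(Z) > d(X), d(Y), and   *)
(* the recursion gives F_e(Z) = F_e(X) + F_e(Y).                       *)
Inductive fib_edge (X1 X2 : region) :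
    region -> region -> region -> nat -> nat -> Prop :=
  | fib_start : forall W, common_nb X1 X2 W ->
      fib_edge X1 X2 X1 X2 W 1 1
  | fib_left : forall X Y W Z a b,
      fib_edge X1 X2 X Y W a b -> common_nb X Y Z -> Z <> W ->
      fib_edge X1 X2 X Z Y a (a + b)
  | fib_right : forall X Y W Z a b,
      fib_edge X1 X2 X Y W a b -> common_nb X Y Z -> Z <> W ->
      fib_edge X1 X2 Y Z X b (a + b).

Definition fib_val (X1 X2 Z : region) (k : nat) : Prop :=
  ((Z = X1 \/ Z = X2) /\ k = 1%nat) \/
  (exists X Y W a b, fib_edge X1 X2 X Y W a b /\
     common_nb X Y Z /\ Z <> W /\ k = (a + b)%nat).

Definition fib (X1 X2 : region) (Z : region) : nat :=
  epsilon (inhabits 0%nat) (fib_val X1 X2 Z).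

(* log^+ |z| = max (log |z|, 0); note ln 0 = 0 in Stdlib, so log^+|0| = 0 *)
Definition logplus (z : C) : R := Rmax (ln (Cmod z)) 0.

From Stdlib Require Import Reals ZArith Lia Psatz Zwf ClassicalEpsilon ProofIrrelevance Classical.
From Coquelicot Require Import Coquelicot.

(* If [phi Z + phi W = c - phi X phi Y] with |c| <= K, then
     log+|phi Z| <= ln (3K) + max (log+|phi X| + log+|phi Y|, log+|phi W|),
   so log+|phi| + ln (3K) is subadditive along the recursion defining F_e;
   induction over the edges directed away from e then gives
   log+|phi X| + ln (3K) <= kappa F_e(X) once kappa dominates the regions
   around e.  That F_e is defined on every region is the Stern-Brocot
   description of the Farey tree: in the basis of e, a region other than
   X1, X2 has coordinates (m, n), up to sign and up to the sign of X2, with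
   m, n > 0 coprime; (m, n) is the column sum of a nonnegative unimodular
   matrix, and such matrices arise from the identity by adding one column to
   the other, which is the step of [fib_edge]. *)

Section Lattice.
Local Open Scope Z_scope.

Definition vec (X : region) : Z * Z := proj1_sig X.
Definition det2 (u v : Z * Z) : Z := fst u * snd v - snd u * fst v.
Definition zscale (s : Z) (u : Z * Z) : Z * Z := (s * fst u, s * snd u).
Definition lincomb (e g : Z * Z) (m n : Z) : Z * Z :=
  (m * fst e + n * fst g, m * snd e + n * snd g).

Definition pm_eq (u v : Z * Z) : Prop := exists s, Z.abs s = 1 /\ u = zscale s v.

Lemma unit_cases s : Z.abs s = 1 -> s = 1 \/ s = -1.
Proof. lia. Qed.

Lemma zscale1 u : zscale 1 u = u.
Proof. destruct u; unfold zscale; cbn [fst snd]; f_equal; ring. Qed.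

Lemma zscaleA s t u : zscale s (zscale t u) = zscale (s * t) u.
Proof. unfold zscale; cbn [fst snd]; f_equal; ring. Qed.

Lemma pm_eq_refl u : pm_eq u u.
Proof. exists 1; rewrite zscale1; auto. Qed.

Lemma pm_eq_scale s u : Z.abs s = 1 -> pm_eq (zscale s u) u.
Proof. exists s; auto. Qed.

Lemma pm_eq_sym u v : pm_eq u v -> pm_eq v u.
Proof.
  intros (s & Hs & ->); exists s; split; auto.
  rewrite zscaleA; destruct (unit_cases s Hs) as [-> | ->]; simpl; rewrite zscale1; auto.
Qed.

Lemma pm_eq_trans u v w : pm_eq u v -> pm_eq v w -> pm_eq u w.
Proof.
  intros (s & Hs & ->) (t & Ht & ->); exists (s * t).
  rewrite zscaleA, Z.abs_mul, Hs, Ht; auto.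
Qed.

Lemma det2_zscale s t u v : det2 (zscale s u) (zscale t v) = s * t * det2 u v.
Proof. unfold det2, zscale; cbn [fst snd]; ring. Qed.

Lemma det2_diag u : det2 u u = 0.
Proof. unfold det2; ring. Qed.

Lemma det2_pm_eq u u' v v' : pm_eq u u' -> pm_eq v v' ->
  Z.abs (det2 u v) = Z.abs (det2 u' v').
Proof.
  intros (s & Hs & ->) (t & Ht & ->).
  rewrite det2_zscale, !Z.abs_mul, Hs, Ht; lia.
Qed.

Lemma det2_lincomb e g m n m' n' :
  det2 (lincomb e g m n) (lincomb e g m' n') = (m * n' - n * m') * det2 e g.
Proof. unfold det2, lincomb; cbn [fst snd]; ring. Qed.

Lemma lincomb_zscale e g s m n : lincomb e g (s * m) (s * n) = zscale s (lincomb e g m n).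
Proof. unfold lincomb, zscale; cbn [fst snd]; f_equal; ring. Qed.

Lemma lincomb10 e g : lincomb e g 1 0 = e.
Proof. destruct e; unfold lincomb; cbn [fst snd]; f_equal; ring. Qed.

Lemma lincomb01 e g : lincomb e g 0 1 = g.
Proof. destruct g; unfold lincomb; cbn [fst snd]; f_equal; ring. Qed.

Lemma adj_iff_det2 X Y : adj X Y <-> Z.abs (det2 (vec X) (vec Y)) = 1.
Proof. reflexivity. Qed.

Lemma adj_of_pm_eq X Y u v : pm_eq (vec X) u -> pm_eq (vec Y) v ->
  Z.abs (det2 u v) = 1 -> adj X Y.
Proof. intros HX HY H; apply adj_iff_det2; rewrite (det2_pm_eq _ _ _ _ HX HY); auto. Qed.

Lemma neq_of_pm_eq X Y u v : pm_eq (vec X) u -> pm_eq (vec Y) v -> det2 u v <> 0 -> X <> Y.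
Proof.
  intros HX HY Huv ->; apply Huv.
  assert (H := det2_pm_eq _ _ _ _ (pm_eq_sym _ _ HX) (pm_eq_sym _ _ HY)).
  rewrite det2_diag in H; simpl in H; lia.
Qed.

Lemma adj_sym X Y : adj X Y -> adj Y X.
Proof. unfold adj; intro H; rewrite <- H, <- Z.abs_opp; f_equal; ring. Qed.

Lemma region_eq_of_pm_eq X Y : pm_eq (vec X) (vec Y) -> X = Y.
Proof.
  destruct X as [[a b] HX], Y as [[c d] HY]; unfold vec, zscale; cbn [fst snd proj1_sig].
  intros (s & Hs & Hv); injection Hv as -> ->.
  destruct (unit_cases s Hs) as [-> | ->].
  - revert HX; rewrite !Z.mul_1_l; intro HX; f_equal; apply proof_irrelevance.
  - exfalso; unfold is_region in HX, HY; cbn [fst snd] in HX, HY; lia.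
Qed.

Lemma region_of_primitive a b : Z.gcd a b = 1 -> exists X : region, pm_eq (vec X) (a, b).
Proof.
  intro Hab.
  destruct (Z.lt_trichotomy b 0) as [Hb | [-> | Hb]].
  - assert (Hn : is_region (- a, - b)) by
      (split; cbn [fst snd]; [rewrite Z.gcd_opp_l, Z.gcd_opp_r; auto | lia]).
    exists (exist _ _ Hn); exists (-1); split; [reflexivity |].
    unfold zscale, vec; cbn [fst snd proj1_sig]; f_equal; ring.
  - rewrite Z.gcd_0_r in Hab.
    assert (H1 : is_region (1, 0)) by (split; cbn [fst snd]; auto).
    exists (exist _ _ H1); exists a; split; auto.
    unfold zscale, vec; cbn [fst snd proj1_sig]; f_equal; nia.
  - assert (H : is_region (a, b)) by (split; cbn [fst snd]; auto).
    exists (exist _ _ H); apply pm_eq_refl.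
Qed.

Lemma gcd_1_of_det2 u v : Z.abs (det2 u v) = 1 -> Z.gcd (fst u) (snd u) = 1.
Proof.
  unfold det2; intro H; apply Z.divide_1_r_nonneg; [apply Z.gcd_nonneg |].
  rewrite <- H; apply Z.divide_abs_r, Z.divide_sub_r; apply Z.divide_mul_l;
    [apply Z.gcd_divide_l | apply Z.gcd_divide_r].
Qed.

Lemma region_of_unimodular u v : Z.abs (det2 u v) = 1 -> exists X : region, pm_eq (vec X) u.
Proof. destruct u; intro H; apply region_of_primitive, (gcd_1_of_det2 _ _ H). Qed.

End Lattice.

Section SternBrocot.
Local Open Scope Z_scope.

Lemma nonneg_unimodular_cases a c b d : 0 <= a -> 0 <= b -> 0 <= c -> 0 <= d ->
  Z.abs (a * d - c * b) = 1 ->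
  (b <= a /\ d <= c /\ 0 < b + d) \/ (a <= b /\ c <= d /\ 0 < a + c) \/
  (a = 1 /\ c = 0 /\ b = 0 /\ d = 1) \/ (a = 0 /\ c = 1 /\ b = 1 /\ d = 0).
Proof.
  intros Ha Hb Hc Hd Hdet.
  destruct (Z_le_gt_dec b a), (Z_le_gt_dec d c).
  - left; nia.
  - destruct (Z_le_gt_dec a b); [right; left; nia | right; right; left; nia].
  - destruct (Z_le_gt_dec c d); [right; left; nia | right; right; right; nia].
  - right; left; nia.
Qed.

Lemma coprime_column_sum m n : 1 <= m -> 1 <= n -> Z.gcd m n = 1 ->
  exists a c b d, 0 <= a /\ 0 <= b /\ 0 <= c /\ 0 <= d /\
    Z.abs (a * d - c * b) = 1 /\ a + b = m /\ c + d = n.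
Proof.
  remember (m + n) as N eqn:HN; revert m n HN.
  induction N as [N IH] using (well_founded_induction (Zwf_well_founded 0)).
  intros m n HN Hm Hn Hg.
  destruct (Z.lt_trichotomy m n) as [Hlt | [<- | Hgt]].
  - rewrite <- Z.gcd_sub_diag_r in Hg.
    destruct (IH (m + (n - m)) ltac:(unfold Zwf; lia) m (n - m) eq_refl Hm ltac:(lia) Hg)
      as (a & c & b & d & H); exists a, (a + c), b, (b + d); lia.
  - rewrite Z.gcd_diag in Hg; exists 1, 0, 0, 1; lia.
  - rewrite Z.gcd_comm, <- Z.gcd_sub_diag_r, Z.gcd_comm in Hg.
    destruct (IH ((m - n) + n) ltac:(unfold Zwf; lia) (m - n) n eq_refl ltac:(lia) Hn Hg)
      as (a & c & b & d & H); exists (a + c), c, (b + d), d; lia.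
Qed.

End SternBrocot.

Section FareyEdges.
Local Open Scope Z_scope.
Variables (X1 X2 : region) (g : Z * Z).
Hypothesis X2_pm_g : pm_eq (vec X2) g.
Hypothesis det_X1_g : Z.abs (det2 (vec X1) g) = 1.

Local Notation F := (lincomb (vec X1) g).

Lemma adj_of_coords X Y a c b d : pm_eq (vec X) (F a c) -> pm_eq (vec Y) (F b d) ->
  Z.abs (a * d - c * b) = 1 -> adj X Y.
Proof.
  intros HX HY H; apply (adj_of_pm_eq _ _ _ _ HX HY).
  rewrite det2_lincomb, Z.abs_mul, H, det_X1_g; reflexivity.
Qed.

Lemma neq_of_coords X Y a c b d : pm_eq (vec X) (F a c) -> pm_eq (vec Y) (F b d) ->
  a * d - c * b <> 0 -> X <> Y.
Proof.
  intros HX HY H; apply (neq_of_pm_eq _ _ _ _ HX HY).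
  rewrite det2_lincomb; apply Z.neq_mul_0; split; [exact H | lia].
Qed.

Lemma region_of_coords a c b d : Z.abs (a * d - c * b) = 1 ->
  exists X : region, pm_eq (vec X) (F a c).
Proof.
  intro H; apply (region_of_unimodular _ (F b d)).
  rewrite det2_lincomb, Z.abs_mul, H, det_X1_g; reflexivity.
Qed.

Lemma pm_eq_coords_opp m n : pm_eq (F m n) (F (- m) (- n)).
Proof.
  replace m with ((-1) * (- m)) at 1 by ring; replace n with ((-1) * (- n)) at 1 by ring.
  rewrite lincomb_zscale; apply pm_eq_scale; reflexivity.
Qed.

Definition edge_reached (a c b d : Z) : Prop :=
  exists X Y W k l, fib_edge X1 X2 X Y W k l /\
    ((pm_eq (vec X) (F a c) /\ pm_eq (vec Y) (F b d)) \/
     (pm_eq (vec X) (F b d) /\ pm_eq (vec Y) (F a c))) /\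
    pm_eq (vec W) (F (a - b) (c - d)).

Lemma edge_reached_swap a c b d : edge_reached a c b d -> edge_reached b d a c.
Proof.
  intros (X & Y & W & k & l & He & HXY & HW).
  exists X, Y, W, k, l; split; [exact He | split; [tauto |]].
  apply (pm_eq_trans _ _ _ HW).
  replace (b - a) with (- (a - b)) by ring; replace (d - c) with (- (c - d)) by ring.
  apply pm_eq_coords_opp.
Qed.

Lemma edge_reached_base : edge_reached 1 0 0 1.
Proof.
  assert (HX1 : pm_eq (vec X1) (F 1 0)) by (rewrite lincomb10; apply pm_eq_refl).
  assert (HX2 : pm_eq (vec X2) (F 0 1)) by (rewrite lincomb01; exact X2_pm_g).
  destruct (region_of_coords 1 (-1) 1 0 eq_refl) as [W HW].
  exists X1, X2, W, 1%nat, 1%nat; split.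
  - apply fib_start; split;
      [apply (adj_of_coords _ _ _ _ _ _ HX1 HW) | apply (adj_of_coords _ _ _ _ _ _ HX2 HW)];
      reflexivity.
  - split; [left; split; assumption | exact HW].
Qed.

Lemma adj_column_sum T Z a c b d : Z.abs (a * d - c * b) = 1 ->
  pm_eq (vec Z) (F (a + b) (c + d)) ->
  pm_eq (vec T) (F a c) \/ pm_eq (vec T) (F b d) -> adj T Z.
Proof.
  intros Hdet HZ [HT | HT]; apply (adj_of_coords _ _ _ _ _ _ HT HZ).
  - replace (a * (c + d) - c * (a + b)) with (a * d - c * b) by ring; exact Hdet.
  - replace (b * (c + d) - d * (a + b)) with (- (a * d - c * b)) by ring.
    rewrite Z.abs_opp; exact Hdet.
Qed.

Lemma edge_reached_add a c b d : Z.abs (a * d - c * b) = 1 ->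
  edge_reached a c b d -> edge_reached (a + b) (c + d) b d.
Proof.
  intros Hdet (X & Y & W & k & l & He & HXY & HW).
  assert (Hdet' : Z.abs ((a + b) * d - (c + d) * b) = 1)
    by (replace ((a + b) * d - (c + d) * b) with (a * d - c * b) by ring; exact Hdet).
  destruct (region_of_coords _ _ _ _ Hdet') as [Z HZ].
  assert (HZW : Z <> W) by (apply (neq_of_coords _ _ _ _ _ _ HZ HW); lia).
  assert (HXYZ : common_nb X Y Z)
    by (split; apply (adj_column_sum _ _ a c b d Hdet HZ); tauto).
  unfold edge_reached; replace (a + b - b) with a by ring; replace (c + d - d) with c by ring.
  destruct HXY as [[HX HY] | [HX HY]].
  - exists Y, Z, X, l, (k + l)%nat; split; [| tauto].
    apply (fib_right _ _ _ _ W); assumption.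
  - exists X, Z, Y, k, (k + l)%nat; split; [| tauto].
    apply (fib_left _ _ _ _ W); assumption.
Qed.

Lemma edge_reached_nonneg a c b d : 0 <= a -> 0 <= b -> 0 <= c -> 0 <= d ->
  Z.abs (a * d - c * b) = 1 -> edge_reached a c b d.
Proof.
  remember (a + b + c + d) as N eqn:HN; revert a c b d HN.
  induction N as [N IH] using (well_founded_induction (Zwf_well_founded 0)).
  intros a c b d HN Ha Hb Hc Hd Hdet.
  destruct (nonneg_unimodular_cases a c b d Ha Hb Hc Hd Hdet)
    as [(Hba & Hdc & Hbd) | [(Hab & Hcd & Hac) | [(-> & -> & -> & ->) | (-> & -> & -> & ->)]]].
  - replace a with (a - b + b) by ring; replace c with (c - d + d) by ring.
    assert (Hdet' : Z.abs ((a - b) * d - (c - d) * b) = 1)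
      by (replace ((a - b) * d - (c - d) * b) with (a * d - c * b) by ring; exact Hdet).
    apply edge_reached_add; [exact Hdet' |].
    apply (IH (a + c)); [unfold Zwf; lia | ring | lia | lia | lia | lia | exact Hdet'].
  - apply edge_reached_swap.
    replace b with (b - a + a) by ring; replace d with (d - c + c) by ring.
    assert (Hdet' : Z.abs ((b - a) * c - (d - c) * a) = 1)
      by (replace ((b - a) * c - (d - c) * a) with (- (a * d - c * b)) by ring;
          rewrite Z.abs_opp; exact Hdet).
    apply edge_reached_add; [exact Hdet' |].
    apply (IH (b + d)); [unfold Zwf; lia | ring | lia | lia | lia | lia | exact Hdet'].
  - exact edge_reached_base.
  - apply edge_reached_swap, edge_reached_base.
Qed.

Lemma fib_val_of_pos_coords Z m n : 1 <= m -> 1 <= n -> Z.gcd m n = 1 ->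
  pm_eq (vec Z) (F m n) -> exists k, fib_val X1 X2 Z k.
Proof.
  intros Hm Hn Hmn HZ.
  destruct (coprime_column_sum m n Hm Hn Hmn)
    as (a & c & b & d & Ha & Hb & Hc & Hd & Hdet & <- & <-).
  destruct (edge_reached_nonneg a c b d Ha Hb Hc Hd Hdet)
    as (X & Y & W & k & l & He & HXY & HW).
  assert (HZW : Z <> W) by (apply (neq_of_coords _ _ _ _ _ _ HZ HW); lia).
  exists (k + l)%nat; right; exists X, Y, W, k, l.
  repeat split; auto; apply (adj_column_sum _ _ a c b d Hdet HZ); tauto.
Qed.

End FareyEdges.

Section Coordinates.
Local Open Scope Z_scope.

Lemma coords_of_unimodular e h w : Z.abs (det2 e h) = 1 ->
  exists m n, w = lincomb e h m n.
Proof.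
  intro Hdet; set (D := det2 e h) in Hdet.
  assert (HD : D * D = 1) by (destruct (unit_cases D Hdet) as [-> | ->]; reflexivity).
  exists (D * det2 w h), (D * det2 e w).
  assert (Cramer : lincomb e h (det2 w h) (det2 e w) = zscale D w)
    by (unfold lincomb, zscale, D, det2; cbn [fst snd]; f_equal; ring).
  rewrite lincomb_zscale, Cramer, zscaleA, HD, zscale1; reflexivity.
Qed.

Lemma gcd_coords e h m n w : Z.gcd (fst w) (snd w) = 1 -> w = lincomb e h m n ->
  Z.gcd m n = 1.
Proof.
  intros Hw ->; apply Z.divide_1_r_nonneg; [apply Z.gcd_nonneg | rewrite <- Hw].
  apply Z.gcd_greatest; cbn [fst snd lincomb];
    apply Z.divide_add_r; apply Z.divide_mul_l;
    [apply Z.gcd_divide_l | apply Z.gcd_divide_r | apply Z.gcd_divide_l | apply Z.gcd_divide_r].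
Qed.

Lemma lincomb_zscale_r e h s m n : lincomb e (zscale s h) m n = lincomb e h m (n * s).
Proof. unfold lincomb, zscale; cbn [fst snd]; f_equal; ring. Qed.

Lemma region_eq_of_axis_coord X Z m : pm_eq (vec Z) (zscale m (vec X)) -> Z = X.
Proof.
  intros (s & Hs & HZ); apply region_eq_of_pm_eq.
  pose proof (proj1 (proj2_sig Z)) as HgZ; fold (vec Z) in HgZ.
  pose proof (proj1 (proj2_sig X)) as HgX; fold (vec X) in HgX.
  rewrite HZ, zscaleA in HgZ; unfold zscale in HgZ; cbn [fst snd] in HgZ.
  rewrite Z.gcd_mul_mono_l, HgX, Z.mul_1_r in HgZ.
  rewrite HZ, zscaleA; apply pm_eq_scale; exact HgZ.
Qed.

Theorem fib_val_exists X1 X2 : adj X1 X2 -> forall Z, exists k, fib_val X1 X2 Z k.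
Proof.
  intros H12 Z; pose proof (proj1 (adj_iff_det2 _ _) H12) as Hdet.
  destruct (coords_of_unimodular _ _ (vec Z) Hdet) as (m & n & HZ).
  assert (Hmn : Z.gcd m n = 1) by exact (gcd_coords _ _ _ _ _ (proj1 (proj2_sig Z)) HZ).
  destruct (Z.eq_dec n 0) as [-> | Hn]; [| destruct (Z.eq_dec m 0) as [-> | Hm]].
  - exists 1%nat; left; split; [left | reflexivity].
    apply (region_eq_of_axis_coord _ _ m).
    replace (vec Z) with (zscale m (vec X1))
      by (rewrite HZ; unfold lincomb, zscale, vec; cbn [fst snd]; f_equal; ring).
    apply pm_eq_refl.
  - exists 1%nat; left; split; [right | reflexivity].
    apply (region_eq_of_axis_coord _ _ n).
    replace (vec Z) with (zscale n (vec X2))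
      by (rewrite HZ; unfold lincomb, zscale, vec; cbn [fst snd]; f_equal; ring).
    apply pm_eq_refl.
  - (* Flipping the sign of X2's representative makes both coordinates positive. *)
    set (s := Z.sgn m * Z.sgn n).
    assert (Hs : Z.abs s = 1) by (unfold s; lia).
    apply (fib_val_of_pos_coords X1 X2 (zscale s (vec X2))) with (m := Z.abs m) (n := Z.abs n).
    + apply pm_eq_sym, pm_eq_scale, Hs.
    + rewrite <- (zscale1 (vec X1)), det2_zscale, !Z.abs_mul, Hs, Hdet; reflexivity.
    + lia.
    + lia.
    + rewrite Z.gcd_abs_l, Z.gcd_abs_r; exact Hmn.
    + exists (Z.sgn m); split; [lia |].
      rewrite lincomb_zscale_r, <- lincomb_zscale, HZ; unfold s; f_equal; nia.
Qed.

End Coordinates.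

Lemma fib_edge_adj X1 X2 X Y W a b : adj X1 X2 -> fib_edge X1 X2 X Y W a b ->
  adj X Y /\ common_nb X Y W /\ (1 <= a)%nat /\ (1 <= b)%nat.
Proof.
  intro H12; induction 1 as [W HW | X Y W Z a b _ IH [HXZ HYZ] _ | X Y W Z a b _ IH [HXZ HYZ] _].
  - repeat split; auto; apply HW.
  - destruct IH as (HXY & _ & Ha & Hb).
    repeat split; [exact HXZ | exact HXY | apply adj_sym, HYZ | lia | lia].
  - destruct IH as (HXY & _ & Ha & Hb).
    repeat split; [exact HYZ | apply adj_sym, HXY | apply adj_sym, HXZ | lia | lia].
Qed.

Section LogPlus.
Local Open Scope R_scope.

Lemma exp_le x y : x <= y -> exp x <= exp y.
Proof. intros [H | ->]; [left; apply exp_increasing, H | right; reflexivity]. Qed.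

Lemma logplus_nonneg z : 0 <= logplus z.
Proof. apply Rmax_r. Qed.

Lemma exp_logplus z : exp (logplus z) = Rmax 1 (Cmod z).
Proof.
  unfold logplus; destruct (Rle_lt_dec 1 (Cmod z)) as [H1 | H1].
  - assert (0 <= ln (Cmod z)) by (rewrite <- ln_1; apply ln_le; lra).
    rewrite Rmax_left, exp_ln, Rmax_right; lra.
  - assert (ln (Cmod z) <= 0).
    { destruct (Cmod_ge_0 z) as [H0 | <-].
      - rewrite <- ln_1; apply ln_le; lra.
      - unfold ln; destruct (Rlt_dec 0 0) as [H00 | _]; [exfalso; lra | apply Rle_refl]. }
    rewrite Rmax_right, exp_0, Rmax_left; lra.
Qed.

Lemma logplus_le_ln z M : 1 <= M -> Cmod z <= M -> logplus z <= ln M.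
Proof.
  intros HM Hz; rewrite <- (ln_exp (logplus z)), exp_logplus.
  apply ln_le; [apply (Rlt_le_trans _ 1); [lra | apply Rmax_l] | apply Rmax_lub; lra].
Qed.

Lemma Cmod_le_exp_logplus z : Cmod z <= exp (logplus z).
Proof. rewrite exp_logplus; apply Rmax_r. Qed.

(* If [z + w = c - x y] then [|z| <= |c| + e^Lx e^Ly + e^Lw <= 3 K e^T]. *)
Lemma logplus_recurrence (c x y w z : C) K T : 1 <= K -> Cmod c <= K ->
  (z + w = c - x * y)%C -> logplus x + logplus y <= T -> logplus w <= T ->
  logplus z <= ln (3 * K) + T.
Proof.
  intros HK Hc Hz Hxy Hw.
  assert (Hmod : Cmod z <= Cmod c + Cmod x * Cmod y + Cmod w).
  { replace z with (c + - (x * y) + - w)%C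
      by (replace (c + - (x * y))%C with (c - x * y)%C by ring; rewrite <- Hz; ring).
    eapply Rle_trans; [apply Cmod_triangle |]; rewrite Cmod_opp.
    eapply Rle_trans; [apply Rplus_le_compat_r, Cmod_triangle |].
    rewrite Cmod_opp, Cmod_mult; lra. }
  assert (HxyT : exp (logplus x) * exp (logplus y) <= exp T)
    by (rewrite <- exp_plus; apply exp_le, Hxy).
  assert (HwT : exp (logplus w) <= exp T) by (apply exp_le, Hw).
  assert (HT : 1 <= exp T)
    by (rewrite <- exp_0; apply exp_le; pose proof (logplus_nonneg w); lra).
  assert (Cmod x * Cmod y <= exp (logplus x) * exp (logplus y))
    by (apply Rmult_le_compat; auto using Cmod_ge_0, Cmod_le_exp_logplus).
  pose proof (Cmod_le_exp_logplus w).
  rewrite <- (ln_exp T); rewrite <- ln_mult; [| lra | apply exp_pos].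
  apply logplus_le_ln; nra.
Qed.

End LogPlus.

Section FibonacciBound.
Local Open Scope R_scope.
Variables (phi : region -> C) (K : R) (X1 X2 : region).
Hypothesis K_ge1 : 1 <= K.
Hypothesis phi_edge : forall X Y Z W, adj X Y -> common_nb X Y Z -> common_nb X Y W ->
  Z <> W -> exists c, Cmod c <= K /\ (phi Z + phi W = c - phi X * phi Y)%C.
Hypothesis X1_adj_X2 : adj X1 X2.

Lemma ln_3K_nonneg : 0 <= ln (3 * K).
Proof. rewrite <- ln_1; apply ln_le; lra. Qed.

Lemma logplus_far_region X Y Z W T : adj X Y -> common_nb X Y Z -> common_nb X Y W ->
  Z <> W -> logplus (phi X) + logplus (phi Y) <= T -> logplus (phi W) <= T ->
  logplus (phi Z) <= ln (3 * K) + T.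
Proof.
  intros HXY HZ HW HZW HT HWT.
  destruct (phi_edge X Y Z W HXY HZ HW HZW) as (c & Hc & Heq).
  exact (logplus_recurrence _ _ _ _ _ _ _ K_ge1 Hc Heq HT HWT).
Qed.

(* The two regions at the endpoints of X1 cap X2 are bounded: one of them
   determines the other through the edge relation. *)
Lemma common_nb_logplus_bounded : exists D, 0 <= D /\
  forall W, common_nb X1 X2 W -> logplus (phi W) <= D.
Proof.
  destruct (classic (exists W0, common_nb X1 X2 W0)) as [[W0 HW0] | Hnone].
  - set (T := logplus (phi X1) + logplus (phi X2) + logplus (phi W0)).
    pose proof (logplus_nonneg (phi X1)); pose proof (logplus_nonneg (phi X2)).
    pose proof (logplus_nonneg (phi W0)); pose proof ln_3K_nonneg.
    exists (ln (3 * K) + T); split; [unfold T; lra |].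
    intros W HW; destruct (classic (W = W0)) as [-> | HWW0]; [unfold T; lra |].
    apply (logplus_far_region X1 X2 W W0); auto; unfold T; lra.
  - exists 0; split; [lra |]; intros W HW; exfalso; eauto.
Qed.

Variable ka : R.
Hypothesis ln_3K_le_ka : ln (3 * K) <= ka.
Hypothesis X1_bound : logplus (phi X1) + ln (3 * K) <= ka.
Hypothesis X2_bound : logplus (phi X2) + ln (3 * K) <= ka.
Hypothesis start_bound : forall W, common_nb X1 X2 W ->
  logplus (phi W) + 2 * ln (3 * K) <= 2 * ka.

Definition edge_bounded (X Y W : region) (a b : nat) : Prop :=
  logplus (phi X) + ln (3 * K) <= ka * INR a /\
  logplus (phi Y) + ln (3 * K) <= ka * INR b /\
  logplus (phi W) + 2 * ln (3 * K) <= ka * (INR a + INR b).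

Lemma edge_bounded_far_region X Y W Z a b : fib_edge X1 X2 X Y W a b ->
  edge_bounded X Y W a b -> common_nb X Y Z -> Z <> W ->
  logplus (phi Z) + ln (3 * K) <= ka * INR (a + b).
Proof.
  intros He (HX & HY & HW) HZ HZW.
  destruct (fib_edge_adj _ _ _ _ _ _ _ X1_adj_X2 He) as (HXY & HWnb & _).
  rewrite plus_INR.
  enough (logplus (phi Z) <= ln (3 * K) + (ka * (INR a + INR b) - 2 * ln (3 * K))) by lra.
  apply (logplus_far_region X Y Z W); auto; lra.
Qed.

Lemma fib_edge_bounded X Y W a b : fib_edge X1 X2 X Y W a b -> edge_bounded X Y W a b.
Proof.
  pose proof ln_3K_nonneg.
  intro He; induction He as [W HW | X Y W Z a b He IH HZ HZW | X Y W Z a b He IH HZ HZW].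
  - pose proof (start_bound W HW); unfold edge_bounded; simpl; lra.
  - pose proof (edge_bounded_far_region _ _ _ _ _ _ He IH HZ HZW).
    destruct (fib_edge_adj _ _ _ _ _ _ _ X1_adj_X2 He) as (_ & _ & Ha & _).
    pose proof (le_INR _ _ Ha); simpl in *.
    destruct IH as (HX & HY & _); unfold edge_bounded; rewrite !plus_INR in *; nra.
  - pose proof (edge_bounded_far_region _ _ _ _ _ _ He IH HZ HZW).
    destruct (fib_edge_adj _ _ _ _ _ _ _ X1_adj_X2 He) as (_ & _ & _ & Hb).
    pose proof (le_INR _ _ Hb); simpl in *.
    destruct IH as (HX & HY & _); unfold edge_bounded; rewrite !plus_INR in *; nra.
Qed.

Lemma fib_val_logplus_bound Z k : fib_val X1 X2 Z k -> logplus (phi Z) <= ka * INR k.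
Proof.
  pose proof ln_3K_nonneg.
  intros [[[-> | ->] ->] | (X & Y & W & a & b & He & HZ & HZW & ->)]; simpl; [lra | lra |].
  pose proof (edge_bounded_far_region _ _ _ _ _ _ He (fib_edge_bounded _ _ _ _ _ He) HZ HZW).
  lra.
Qed.

End FibonacciBound.

Lemma markoff_edge_relation Cr Ce p q r s phi : is_markoff_map Cr Ce p q r s phi ->
  forall X Y Z W, adj X Y -> common_nb X Y Z -> common_nb X Y W -> Z <> W ->
  exists c, (c = p \/ c = q \/ c = r) /\ (phi Z + phi W = c - phi X * phi Y)%C.
Proof.
  intros (_ & H1 & H2 & H3) X Y Z W HXY HZ HW HZW.
  destruct (Ce X Y) eqn:HC; [exists p | exists q | exists r]; split; auto.
Qed.

Theorem lemma4p4 :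
  forall (Cr : region -> color) (Ce : region -> region -> color),
    is_coloring Cr Ce ->
  forall (p q r s : C) (phi : region -> C),
    is_markoff_map Cr Ce p q r s phi ->
  forall X1 X2 : region, adj X1 X2 ->
  exists kappa : R, (0 < kappa)%R /\
    forall X : region, (logplus (phi X) <= kappa * INR (fib X1 X2 X))%R.
Proof.
  intros Cr Ce _ p q r s phi Hphi X1 X2 H12.
  set (K := (1 + Cmod p + Cmod q + Cmod r)%R).
  pose proof (Cmod_ge_0 p); pose proof (Cmod_ge_0 q); pose proof (Cmod_ge_0 r).
  assert (HK : (1 <= K)%R) by (unfold K; lra).
  assert (Hedge : forall X Y Z W, adj X Y -> common_nb X Y Z -> common_nb X Y W -> Z <> W ->
    exists c, (Cmod c <= K)%R /\ (phi Z + phi W = c - phi X * phi Y)%C).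
  { intros X Y Z W HXY HZ HW HZW.
    destruct (markoff_edge_relation _ _ _ _ _ _ _ Hphi X Y Z W HXY HZ HW HZW) as (c & Hc & Heq).
    exists c; split; [unfold K; destruct Hc as [-> | [-> | ->]]; lra | exact Heq]. }
  destruct (common_nb_logplus_bounded phi K X1 X2 HK Hedge H12) as (D & HD0 & HD).
  pose proof (ln_3K_nonneg K HK).
  pose proof (logplus_nonneg (phi X1)); pose proof (logplus_nonneg (phi X2)).
  set (ka := (logplus (phi X1) + logplus (phi X2) + D + 2 * ln (3 * K) + 1)%R).
  exists ka; split; [unfold ka; lra |].
  intro X; apply (fib_val_logplus_bound phi K X1 X2 HK Hedge H12 ka);
    [unfold ka; lra .. | intros W HW; pose proof (HD W HW); unfold ka; lra |].
  unfold fib; apply epsilon_spec, fib_val_exists, H12.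
Qed.
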